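(* Let $\mathsf{A}$ be a function from the pairs $i<j$ of a finite linear order $\{0,\dots,n-1\}$ into the nonnegative integers satisfying condition (!). If $i<j<k<n$ and $\mathsf{A}(j,k)=0$, then $\mathsf{A}(i,k)=0$.
   Context: For integers $p,q,r$ write $r=p\,!\,q$ if $r\ge\min(p-1,q)$, with equality holding unless $p=q$. A function $\mathsf{A}$ on pairs $a<b$ of a finite linear order into the nonnegative integers satisfies (!) if $\mathsf{A}(a,b)=\mathsf{A}(b,c)\,!\,\mathsf{A}(a,c)$ whenever $a<b<c$. *)

From Stdlib Require Import ZArith.
Open Scope Z_scope.

(* r = p ! q  :  r >= min(p-1, q), with equality unless p = q (integers). *)
Definition bang_rel (p q r : Z) : Prop :=
  r >= Z.min (p - 1) q /\ (p <> q -> r = Z.min (p - 1) q).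

Definition cond_bang (n : nat) (A : nat -> nat -> nat) : Prop :=
  forall a b c : nat, (a < b)%nat -> (b < c)%nat -> (c < n)%nat ->
    bang_rel (Z.of_nat (A b c)) (Z.of_nat (A a c)) (Z.of_nat (A a b)).

From Stdlib Require Import ZArith Lia.

(* If [q <> 0 = p], the relation forces [r = min (-1) q < 0]. *)
Lemma bang_rel_0_nonneg (q r : Z) : 0 <= r -> bang_rel 0 q r -> q = 0.
Proof.
  intros r_ge0 [_ r_eq].
  destruct (Z.eq_dec q 0) as [q0 | q_neq0]; [exact q0 |].
  assert (r = Z.min (0 - 1) q) by (apply r_eq; congruence).
  lia.
Qed.

Theorem lemma5p6 (n : nat) (A : nat -> nat -> nat) :
  cond_bang n A ->
  forall i j k : nat, (i < j)%nat -> (j < k)%nat -> (k < n)%nat ->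
    A j k = 0%nat -> A i k = 0%nat.
Proof.
  intros bangA i j k ij jk kn Ajk0.
  pose proof (bangA i j k ij jk kn) as bang_ijk.
  rewrite Ajk0 in bang_ijk.
  apply Nat2Z.inj.
  exact (bang_rel_0_nonneg _ _ (Nat2Z.is_nonneg (A i j)) bang_ijk).
Qed.
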